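(* Let $K$ be a field, and let $R \in \mathfrak R_K$ be of countable type. Then $R$ has a conormed multiplicative basis.
   Context: Socle sequence of a ring $R$: $S_0 = 0$, $S_{\alpha+1}/S_\alpha = \mathrm{Soc}(R/S_\alpha)$, $S_\alpha = \bigcup_{\beta<\alpha}S_\beta$ for limit $\alpha$; $R$ is semiartinian if $S_\tau = R$ for some $\tau$, the least such $\tau$ (of the form $\sigma+1$) being the Loewy length; layers $L_\alpha = S_{\alpha+1}/S_\alpha$. $K^{(\lambda)}$ is the direct sum of $\lambda$ copies of $K$ as a $K$-algebra without unit. $\mathfrak R_K$ is the class of commutative von Neumann regular semiartinian $K$-algebras $R$ of Loewy length $\sigma+1$ such that for each $\alpha\le\sigma$ there is a cardinal $\lambda_\alpha>0$ and a $K$-linear isomorphism of $K$-algebras without unit $L_\alpha\cong K^{(\lambda_\alpha)}$. $R$ is of countable type if $\sigma$ and all $\lambda_\alpha$ are countable. A $K$-basis $B$ of a $K$-algebra $R$ is multiplicative if for all $b,b'\in B$ either $bb'=0$ or $bb'\in B$. A $K$-basis $B$ of a semiartinian $K$-algebra $R$ of Loewy length $\sigma+1$ is conormed if $B$ contains a $K$-basis of $S_\alpha$ for each $\alpha\le\sigma$. *)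

From HB Require Import structures.
From mathcomp Require Import all_boot all_order all_algebra.
From mathcomp Require Import boolp classical_sets cardinality.
Set Implicit Arguments. Unset Strict Implicit. Unset Printing Implicit Defensive.
Import GRing.Theory.
Local Open Scope classical_set_scope.
Local Open Scope ring_scope.

Section Defs.
Variables (K : fieldType) (R : comAlgType K).

Definition is_ideal (J : set R) : Prop :=
  [/\ J 0, (forall x y, J x -> J y -> J (x + y)) & (forall r x, J x -> J (r * x))].

(** J/I is a minimal ideal of R/I (J an ideal of R with I strictly contained in J,
    no ideal strictly in between) *)
Definition minimal_over (I J : set R) : Prop :=
  [/\ is_ideal J, I `<=` J, I != J &
      forall J', is_ideal J' -> I `<=` J' -> J' `<=` J -> J' = I \/ J' = J].

(** preimage in R of Soc(R/I): the ideal generated by I and all J with J/I minimal *)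
Definition socle_over (I : set R) : set R :=
  \bigcap_(J in [set J | is_ideal J /\ I `<=` J /\
                  forall M, minimal_over I M -> M `<=` J]) J.

(** The members S_alpha of the socle sequence: the smallest family containing
    S_0 = 0, closed under S |-> S' (S'/S = Soc(R/S)) and under unions
    (limit steps; the union of the empty family is the zero ideal). *)
Inductive socle_stage : set R -> Prop :=
| stage_succ (I : set R) : socle_stage I -> socle_stage (socle_over I)
| stage_union (F : set (set R)) : (forall I, F I -> socle_stage I) ->
    socle_stage ([set 0] `|` \bigcup_(I in F) I).

Definition semiartinian : Prop := socle_stage setT.

Definition von_neumann_regular : Prop := forall a : R, exists x, a = a * x * a.

(** L = T/S is isomorphic, as a K-algebra without unit, to K^(I) (finitely
    supported functions I -> K with pointwise operations); stated through the
    first isomorphism theorem: a surjective K-linear multiplicative map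
    T -> K^(I) with kernel S. *)
Definition layer_iso (S T : set R) (I : Type) : Prop :=
  exists f : R -> I -> K,
  [/\ forall x, T x -> finite_set [set i | f x i != 0],
      forall (a : K) x y, T x -> T y -> f (a *: x + y) = (fun i => a * f x i + f y i),
      forall x y, T x -> T y -> f (x * y) = (fun i => f x i * f y i),
      forall g : I -> K, finite_set [set i | g i != 0] -> exists2 x, T x & f x = g
    & forall x, T x -> (f x = (fun _ => 0) <-> S x)].

Definition in_RK : Prop :=
  [/\ von_neumann_regular, semiartinian &
      forall S, socle_stage S -> S != setT ->
        exists (I : Type), (exists i : I, True) /\ layer_iso S (socle_over S) I].

(** R in R_K of countable type: the Loewy length (equivalently the set of
    socle-sequence members) is countable and every lambda_alpha is countable *)
Definition RK_countable_type : Prop :=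
  [/\ in_RK, countable [set S | socle_stage S] &
      forall S, socle_stage S -> S != setT ->
        exists (I : Type), [/\ exists i : I, True, countable [set: I] &
                              layer_iso S (socle_over S) I]].

Definition lin_free (B : set R) : Prop :=
  forall (s : seq R) (c : R -> K), uniq s -> (forall b, b \in s -> B b) ->
    \sum_(b <- s) c b *: b = 0 -> forall b, b \in s -> c b = 0.

Definition lin_span (B : set R) : set R :=
  [set x | exists (s : seq R) (c : R -> K),
             (forall b, b \in s -> B b) /\ x = \sum_(b <- s) c b *: b].

Definition basis_of_set (B A : set R) : Prop :=
  [/\ B `<=` A, lin_free B & lin_span B = A].

Definition multiplicative_basis (B : set R) : Prop :=
  basis_of_set B setT /\ forall b b', B b -> B b' -> b * b' = 0 \/ B (b * b').

Definition conormed_basis (B : set R) : Prop :=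
  basis_of_set B setT /\
  forall S, socle_stage S -> exists2 B', B' `<=` B & basis_of_set B' S.

End Defs.

From mathcomp Require Import all_boot all_order all_algebra.
From mathcomp Require Import boolp classical_sets functions cardinality.
Set Implicit Arguments. Unset Strict Implicit. Unset Printing Implicit Defensive.
Import GRing.Theory.
Local Open Scope classical_set_scope.
Local Open Scope ring_scope.

(* Lifting the standard bases of the layers L_alpha = K^(lambda_alpha) to
   idempotents of R (possible since R is von Neumann regular) yields countably
   many idempotents d_0, d_1, ... spanning R.  The atoms of the Boolean algebra
   generated by d_0, ..., d_(n-1), i.e. the products of the d_i or 1 - d_i, are
   orthogonal idempotents refining one another.  Whenever d_n splits an atom p
   into two nonzero halves p d_n and p (1 - d_n), put into B a half that enters
   the socle sequence no later than the other, and put 1 into B.  Two elements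
   of B are comparable atoms or orthogonal, so B is multiplicative; the other
   half of p is p minus the kept one, so B spans R; B is free by induction on
   the depth.  As the socle sequence is a chain of ideals, an atom lying in
   S_alpha is a combination of elements of B lying in S_alpha, so B is
   conormed. *)

Lemma seq_sub_nat_cover (T : eqType) (P : nat -> set T) (s : seq T) :
  (forall m n, (m <= n)%N -> P m `<=` P n) ->
  (forall x, x \in s -> exists N, P N x) -> exists N, forall x, x \in s -> P N x.
Proof.
move=> P_mono; elim: s => [|y s IH] sP; first by exists 0%N.
have [|N HN] := IH; first by move=> x xs; apply: sP; rewrite inE xs orbT.
have [M HM] := sP y (mem_head _ _).
exists (maxn N M) => x; rewrite inE => /orP[/eqP->|xs].
  exact: P_mono (leq_maxr N M) _ HM.
exact: P_mono (leq_maxl N M) _ (HN x xs).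
Qed.

Section Ideals.
Variables (K : fieldType) (R : comAlgType K).
Implicit Types (J : set R) (x y : R).

Lemma idealD J x y : is_ideal J -> J x -> J y -> J (x + y).
Proof. by case=> _ + _; apply. Qed.

Lemma idealMl J r x : is_ideal J -> J x -> J (r * x).
Proof. by case=> _ _; apply. Qed.

Lemma idealMr J r x : is_ideal J -> J x -> J (x * r).
Proof. by move=> iJ Jx; rewrite mulrC; apply: idealMl iJ Jx. Qed.

Lemma idealZ J a x : is_ideal J -> J x -> J (a *: x).
Proof. by move=> iJ Jx; rewrite -[x]mul1r scalerAl; apply: idealMl iJ Jx. Qed.

Lemma idealN J x : is_ideal J -> J x -> J (- x).
Proof. by rewrite -scaleN1r; apply: idealZ. Qed.

Lemma idealB J x y : is_ideal J -> J x -> J y -> J (x - y).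
Proof. by move=> iJ Jx /(idealN iJ); apply: idealD. Qed.

End Ideals.

Section SocleSequence.
Variables (K : fieldType) (R : comAlgType K).
Implicit Types (C I S T X Y : set R).

Lemma sub_socle_over I : I `<=` socle_over I.
Proof. by move=> x Ix J [_ [IJ _]]; apply: IJ. Qed.

Lemma is_ideal_socle_over I : is_ideal (socle_over I).
Proof.
split=> [J [[J0 _ _] _] //|x y Hx Hy J HJ|r x Hx J HJ].
  by apply: idealD (Hx J HJ) (Hy J HJ); case: HJ.
by apply: idealMl (Hx J HJ); case: HJ.
Qed.

Lemma socle_stage0 S : socle_stage S -> S 0.
Proof. by elim=> [I _ I0|F _ _]; [apply: sub_socle_over | left]. Qed.

(* Zermelo's tower argument: every stage is extreme, so the stages form a chain. *)
Definition extreme_stage C := forall X, socle_stage X -> X `<=` C -> X <> C ->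
  socle_over X `<=` C.

Lemma extreme_stage_cmp C : socle_stage C -> extreme_stage C ->
  forall X, socle_stage X -> X `<=` C \/ socle_over C `<=` X.
Proof.
move=> sC eC X; elim=> [Y sY IH|F sF IH].
  case: IH => [YC|CY]; last by right; apply: subset_trans CY (@sub_socle_over Y).
  have [->|nYC] := pselect (Y = C); first by right.
  by left; apply: eC.
have [FC|] := pselect (forall Y, F Y -> Y `<=` C).
  left=> x [->|[Y FY Yx]]; [exact: socle_stage0 | exact: FC FY _ Yx].
move=> /existsNP[Y /not_implyP[FY nYC]].
have [//|CY] := IH Y FY.
by right=> x /CY Yx; right; exists Y.
Qed.

Lemma socle_stage_extreme C : socle_stage C -> extreme_stage C.
Proof.
elim=> [Y sY eY|F sF IH] X sX XC nXC.
  have [XY|YX] := extreme_stage_cmp sY eY sX; last first.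
    by exfalso; apply: nXC; apply/seteqP; split.
  have [->//|nXY] := pselect (X = Y).
  exact: subset_trans (eY X sX XY nXY) (@sub_socle_over Y).
have [z [[z0|[Y FY Yz]] nXz]] : exists z, ([set 0] `|` \bigcup_(I in F) I) z /\ ~ X z.
- apply: contra_notP nXC => H; apply/seteqP; split=> // x Cx.
  by apply: contra_notP H => nx; exists x.
- by exfalso; apply: nXz; rewrite z0; apply: socle_stage0.
have XY : X `<=` Y.
  have [//|YX] := extreme_stage_cmp (sF Y FY) (IH Y FY) sX.
  by exfalso; apply/nXz/YX; apply: sub_socle_over.
have nXY : X <> Y by move=> E; apply: nXz; rewrite E.
by move=> x /(IH Y FY X sX XY nXY) Yx; right; exists Y.
Qed.

Lemma socle_stage_chain S T : socle_stage S -> socle_stage T -> S `<=` T \/ T `<=` S.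
Proof.
move=> sS sT; case: (extreme_stage_cmp sT (socle_stage_extreme sT) sS) => [|TS].
  by left.
by right; apply: subset_trans TS; apply: sub_socle_over.
Qed.

Lemma socle_stage_ideal S : socle_stage S -> is_ideal S.
Proof.
elim=> [I _ _|F sF IH]; first exact: is_ideal_socle_over.
split=> [|x y [->|[X FX Xx]] [->|[Y FY Yy]]|r x [->|[X FX Xx]]].
- by left.
- by rewrite addr0; left.
- by rewrite add0r; right; exists Y.
- by rewrite addr0; right; exists X.
- have [XY|YX] := socle_stage_chain (sF X FX) (sF Y FY).
    by right; exists Y => //; apply: idealD (IH Y FY) (XY _ Xx) Yy.
  by right; exists X => //; apply: idealD (IH X FX) Xx (YX _ Yy).
- by rewrite mulr0; left.
- by right; exists X => //; apply: idealMl (IH X FX) Xx.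
Qed.

End SocleSequence.

Section LinearCombinations.
Variables (K : fieldType) (R : comAlgType K).
Implicit Types (B S : set R) (x y : R).

Definition lincomb B : set R := [set x | exists s : seq (K * R),
  (forall p, p \in s -> B p.2) /\ x = \sum_(p <- s) p.1 *: p.2].

Lemma lincomb0 B : lincomb B 0.
Proof. by exists [::]; rewrite big_nil. Qed.

Lemma lincomb_mem B x : B x -> lincomb B x.
Proof.
move=> Bx; exists [:: (1, x)]; split; last by rewrite big_seq1 scale1r.
by move=> p; rewrite inE => /eqP ->.
Qed.

Lemma lincombD B x y : lincomb B x -> lincomb B y -> lincomb B (x + y).
Proof.
move=> [s [sB ->]] [t [tB ->]]; exists (s ++ t); split; last by rewrite big_cat.
by move=> p; rewrite mem_cat => /orP[/sB|/tB].
Qed.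

Lemma lincombZ B a x : lincomb B x -> lincomb B (a *: x).
Proof.
move=> [s [sB ->]]; exists [seq (a * p.1, p.2) | p <- s]; split.
  by move=> p /mapP[q qs ->]; apply: sB qs.
by rewrite big_map scaler_sumr; apply: eq_bigr => p _; rewrite scalerA.
Qed.

Lemma lincombB B x y : lincomb B x -> lincomb B y -> lincomb B (x - y).
Proof. by move=> Bx /(lincombZ (-1)); rewrite scaleN1r; apply: lincombD. Qed.

Lemma lincomb_sum B (I : eqType) (r : seq I) (F : I -> R) :
  (forall i, i \in r -> lincomb B (F i)) -> lincomb B (\sum_(i <- r) F i).
Proof.
elim: r => [|i r IH] rB; first by rewrite big_nil; apply: lincomb0.
rewrite big_cons; apply: lincombD; first by apply: rB; apply: mem_head.
by apply: IH => j jr; apply: rB; rewrite inE jr orbT.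
Qed.

Lemma lincomb_sub_closed B S : S 0 -> (forall x y, S x -> S y -> S (x + y)) ->
  (forall a x, S x -> S (a *: x)) -> B `<=` S -> lincomb B `<=` S.
Proof.
move=> S0 SD SZ BS _ [s [sB ->]]; elim: s sB => [|p s IH] sB; first by rewrite big_nil.
rewrite big_cons; apply: SD; first by apply/SZ/BS/sB/mem_head.
by apply: IH => q qs; apply: sB; rewrite inE qs orbT.
Qed.

Lemma sub_lincomb B B' : B `<=` B' -> lincomb B `<=` lincomb B'.
Proof.
move=> BB'; apply: lincomb_sub_closed => [||a x|x /BB'].
- exact: lincomb0.
- exact: lincombD.
- exact: lincombZ.
- exact: lincomb_mem.
Qed.

Lemma ideal_lincomb_sub B S : is_ideal S -> B `<=` S -> lincomb B `<=` S.
Proof.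
move=> iS; apply: lincomb_sub_closed; first by case: iS.
  by move=> x y; apply: idealD.
by move=> a x; apply: idealZ.
Qed.

Lemma lincomb_mul_scalar B q x : (forall b, B b -> exists a : K, b * q = a *: q) ->
  lincomb B x -> exists a : K, x * q = a *: q.
Proof.
move=> Bq Bx.
apply: (@lincomb_sub_closed _ [set y | exists a : K, y * q = a *: q] _ _ _ Bq _ Bx).
- by exists 0; rewrite mul0r scale0r.
- by move=> y z [a yq] [b zq]; exists (a + b); rewrite mulrDl yq zq scalerDl.
- by move=> c y [a yq]; exists (c * a); rewrite -scalerAl yq scalerA.
Qed.

Lemma lincomb_nat_cover (P : nat -> set R) B x :
  (forall m n, (m <= n)%N -> P m `<=` P n) -> (forall b, B b -> exists N, P N b) ->
  lincomb B x -> exists N, lincomb (P N) x.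
Proof.
move=> P_mono BP [s [sB ->]].
have [||N HN] := @seq_sub_nat_cover _ (fun N p => P N p.2) s.
- by move=> m n mn p; apply: P_mono.
- by move=> p /sB /BP.
by exists N, s.
Qed.

Lemma lin_spanE B : lin_span B = lincomb B.
Proof.
apply/seteqP; split=> [x [s [c [sB ->]]]|x [s [sB ->]]].
  exists [seq (c b, b) | b <- s]; split; last by rewrite big_map.
  by move=> p /mapP[b bs ->]; apply: sB.
suff [r [c [_ rB E]]] : exists (r : seq R) (c : R -> K), [/\ uniq r,
    (forall b, b \in r -> B b) & \sum_(p <- s) p.1 *: p.2 = \sum_(b <- r) c b *: b].
  by exists r, c.
elim: s sB => [|p s IH] sB.
  by exists [::], (fun _ => 0); rewrite !big_nil.
have [|r [c [r_uniq rB E]]] := IH; first by move=> q qs; apply: sB; rewrite inE qs orbT.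
have Bp : B p.2 by apply/sB/mem_head.
rewrite big_cons E; have [pr|pr] := boolP (p.2 \in r).
  exists r, (fun b => if b == p.2 then c b + p.1 else c b); split=> //.
  rewrite (bigD1_seq p.2) //= (bigD1_seq p.2 pr r_uniq) /= eqxx scalerDl addrCA addrA.
  by congr (_ + _); apply: eq_bigr => b /negPf ->.
exists (p.2 :: r), (fun b => if b == p.2 then p.1 else c b); split => /=.
- by rewrite pr r_uniq.
- by move=> b; rewrite inE => /orP[/eqP->|/rB].
rewrite big_cons eqxx; congr (_ + _); apply: eq_big_seq => b br.
by case: eqP => // bp; rewrite -bp br in pr.
Qed.

Lemma sub_lin_free B B' : B' `<=` B -> lin_free B -> lin_free B'.
Proof. by move=> B'B fB s c us sB; apply: fB => // b /sB /B'B. Qed.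

Lemma lin_free_nat_cover (P : nat -> set R) :
  (forall m n, (m <= n)%N -> P m `<=` P n) -> (forall N, lin_free (P N)) ->
  lin_free [set x | exists N, P N x].
Proof.
move=> P_mono P_free s c us sP; have [N HN] := seq_sub_nat_cover P_mono sP.
exact: P_free us HN.
Qed.

End LinearCombinations.

Section Atoms.
Variables (K : fieldType) (R : comAlgType K) (d : nat -> R).
Hypothesis d_idem : forall n, d n * d n = d n.

Definition lit (b : bool) (x : R) := if b then x else 1 - x.

Lemma lit_idem b n : lit b (d n) * lit b (d n) = lit b (d n).
Proof.
case: b => /=; first exact: d_idem.
by rewrite mulrBl mul1r mulrBr mulr1 d_idem subrr subr0.
Qed.

Lemma lit_orth b b' n : b != b' -> lit b (d n) * lit b' (d n) = 0.
Proof.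
by case: b; case: b' => //= _; rewrite ?mulrBl ?mulrBr ?mul1r ?mulr1 d_idem subrr.
Qed.

Lemma lit_split p b n : p * lit b (d n) + p * lit (~~ b) (d n) = p.
Proof. by rewrite -mulrDr; case: b => /=; rewrite ?[d n + _]addrC subrK mulr1. Qed.

Inductive atom : nat -> R -> Prop :=
| atom0 : atom 0 1
| atomS n p b : atom n p -> atom n.+1 (p * lit b (d n)).

Lemma atom0_inv q : atom 0 q -> q = 1.
Proof. by move=> q0; inversion q0. Qed.

Lemma atomS_inv n q : atom n.+1 q -> exists p b, atom n p /\ q = p * lit b (d n).
Proof. by move=> qn; inversion qn; exists p, b. Qed.

Lemma atom_idem n p : atom n p -> p * p = p.
Proof. by elim=> [|m q b _ IH]; rewrite ?mulr1 // mulrACA IH lit_idem. Qed.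

Lemma atom_orth n p q : atom n p -> atom n q -> p <> q -> p * q = 0.
Proof.
move=> pn; elim: pn q => [|m r b rm IH] q; first by move=> /atom0_inv ->.
move=> /atomS_inv[q' [b' [q'm ->]]] rq; rewrite mulrACA.
have [rq'|/IH -> //] := pselect (r = q'); last by rewrite mul0r.
have bb' : b != b' by apply: contraPneq rq => ->; rewrite rq'.
by rewrite lit_orth // mulr0.
Qed.

Lemma atom_mul_le N q m b : atom N q -> atom m b -> (m <= N)%N ->
  q * b = q \/ q * b = 0.
Proof.
move=> qN; elim: qN m b => [|n p c pn IH] m b bm.
  rewrite leqn0 => /eqP m0; move: bm; rewrite m0 => /atom0_inv ->.
  by left; rewrite mulr1.
rewrite leq_eqVlt ltnS => /orP[/eqP mn|/(IH _ _ bm)]; last first.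
  by rewrite mulrAC => -[->|->]; [left | right; rewrite mul0r].
rewrite mn in bm; have [<-|pb] := pselect (p * lit c (d n) = b).
  by left; apply: atom_idem (atomS c pn).
by right; apply: atom_orth (atomS c pn) bm pb.
Qed.

Lemma atom_mul_d N q i : atom N q -> (i < N)%N -> q * d i = q \/ q * d i = 0.
Proof.
elim=> [//|n p b pn IH]; rewrite ltnS leq_eqVlt => /orP[/eqP->|/IH[]].
- case: b; rewrite /= -mulrA ?d_idem; first by left.
  by rewrite mulrBl mul1r d_idem subrr mulr0; right.
- by rewrite mulrAC => ->; left.
- by rewrite mulrAC => ->; right; rewrite mul0r.
Qed.

Fixpoint atom_seq n : seq R :=
  if n is m.+1 then [seq p * lit b (d m) | p <- atom_seq m, b <- [:: true; false]]
  else [:: 1].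

Lemma atom_seq_atom n p : p \in atom_seq n -> atom n p.
Proof.
elim: n p => [|n IH] p /=; first by rewrite inE => /eqP ->; apply: atom0.
move=> /flatten_mapP[q /IH qn]; rewrite !inE => /orP[]/eqP->.
  exact: atomS true qn.
exact: atomS false qn.
Qed.

Lemma atom_seq_sum n : \sum_(p <- atom_seq n) p = 1.
Proof.
elim: n => [|n IH] /=; first by rewrite big_seq1.
rewrite big_flatten big_map -[RHS]IH; apply: eq_bigr => p _.
by rewrite big_cons big_seq1; apply: (lit_split p true n).
Qed.

Section TreeBasis.
Variable St : set R -> Prop.

Definition splits p n := forall b, p * lit b (d n) != 0.

Definition kept p n : bool :=
  ~~ `[< forall S, St S -> S (p * lit true (d n)) -> S (p * lit false (d n)) >].

Definition kept_closed (S : set R) :=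
  forall n p, S (p * lit (~~ kept p n) (d n)) -> S (p * lit (kept p n) (d n)).

Lemma stage_kept_closed S : (forall S T, St S -> St T -> S `<=` T \/ T `<=` S) ->
  St S -> kept_closed S.
Proof.
move=> St_chain sS n p; rewrite /kept; case: asboolP => [H|/existsNP[T]] /=.
  exact: H.
move=> /not_implyP[sT /not_implyP[Tp1 nTp0]] Sp0.
by case: (St_chain _ _ sS sT) => [ST|]; [case: nTp0; apply: ST | apply].
Qed.

Definition kept_half n x :=
  exists p, [/\ atom n p, splits p n & x = p * lit (kept p n) (d n)].

Definition tree_basis_upto N x := x = 1 \/ exists2 n, (n < N)%N & kept_half n x.

Definition tree_basis : set R := [set x | exists N, tree_basis_upto N x].

Lemma tree_basis_upto_mono m n : (m <= n)%N -> tree_basis_upto m `<=` tree_basis_upto n.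
Proof.
move=> mn x [->|[k km kx]]; first by left.
by right; exists k => //; apply: leq_trans mn.
Qed.

Lemma tree_basis_upto_atom N x :
  tree_basis_upto N x -> exists2 m, (m <= N)%N & atom m x.
Proof.
case=> [->|[n nN [p [pn _ ->]]]]; first by exists 0%N => //; apply: atom0.
by exists n.+1 => //; apply: atomS.
Qed.

Lemma tree_basis_uptoS N x :
  tree_basis_upto N.+1 x -> tree_basis_upto N x \/ kept_half N x.
Proof.
case=> [->|[n]]; first by left; left.
by rewrite ltnS leq_eqVlt => /orP[/eqP->|nN] xn; [right | left; right; exists n].
Qed.

Lemma tree_basis_mul b b' : tree_basis b -> tree_basis b' ->
  b * b' = 0 \/ tree_basis (b * b').
Proof.
move=> Bb Bb'; have [N /tree_basis_upto_atom[m _ bm]] := Bb.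
have [N' /tree_basis_upto_atom[m' _ b'm']] := Bb'.
have [mm'|m'm] := leqP m m'.
  by rewrite mulrC; case: (atom_mul_le b'm' bm mm') => ->; [right | left].
by case: (atom_mul_le bm b'm' (ltnW m'm)) => ->; [right | left].
Qed.

Section KeptHalves.
Variables (N : nat) (q : R).
Hypotheses (qN : atom N q) (q_splits : splits q N).
Local Notation k := (q * lit (kept q N) (d N)).
Local Notation k' := (q * lit (~~ kept q N) (d N)).

(* Every basis element of depth at most N+1 other than k acts by the same scalar
   on both halves k, k' of q; multiplying a linear relation by k and by k'
   therefore isolates the coefficient of k. *)
Lemma mul_kept_halves b : tree_basis_upto N.+1 b ->
  exists a : K, b * k' = a *: k' /\ b * k = a *: k + (b == k)%:R *: k.
Proof.
have k_neq0 : k != 0 := q_splits _.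
have kk : k * k = k := atom_idem (atomS (kept q N) qN).
have qk : q * k = k by rewrite mulrA (atom_idem qN).
have kk' : k * k' = 0 by rewrite mulrACA lit_orth ?mulr0 //; case: kept.
have k_neq_q : k != q.
  apply/eqP => kq; have k'0 : k' = 0 by apply: (addrI k); rewrite addr0 lit_split kq.
  by move: (q_splits (~~ kept q N)); rewrite k'0 eqxx.
have orth_neq b' : b' * k = 0 -> (b' == k)%:R = 0 :> K.
  by move=> b'k; case: eqP => // b'_eq; move: k_neq0; rewrite -kk -{1}b'_eq b'k eqxx.
case/tree_basis_uptoS => [/tree_basis_upto_atom[m mN bm]|[p [pN _ ->]]].
  have bq := atom_mul_le qN bm mN; rewrite mulrC in bq.
  have bkE : b * k = (b * q) * lit (kept q N) (d N) by rewrite mulrA.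
  have bk'E : b * k' = (b * q) * lit (~~ kept q N) (d N) by rewrite mulrA.
  case: bq => bq; last first.
    exists 0; rewrite bk'E bkE bq !mul0r scale0r orth_neq ?scale0r ?addr0 //.
    by rewrite bkE bq mul0r.
  exists 1; rewrite bk'E bkE bq !scale1r.
  case: eqP => [bk|_]; last by rewrite scale0r addr0.
  by move: bq; rewrite bk mulrC qk => /eqP; rewrite (negPf k_neq_q).
exists 0; rewrite !scale0r add0r.
have [->|pq] := pselect (p = q); first by rewrite kk' eqxx scale1r kk.
have pq0 := atom_orth pN qN pq.
by rewrite orth_neq ?scale0r mulrACA pq0 mul0r // mulrACA pq0 mul0r.
Qed.

Lemma kept_half_coef_eq0 (s : seq R) (c : R -> K) : uniq s ->
  (forall b, b \in s -> tree_basis_upto N.+1 b) ->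
  \sum_(b <- s) c b *: b = 0 -> k \in s -> c k = 0.
Proof.
move=> us sB E ks.
have /choice[a Ha] : forall b, exists a : K, b \in s ->
    b * k' = a *: k' /\ b * k = a *: k + (b == k)%:R *: k.
  move=> b; have [/sB/mul_kept_halves[a Ha]|_] := boolP (b \in s); first by exists a.
  by exists 0.
have mulE z : (\sum_(b <- s) c b *: b) * z = \sum_(b <- s) c b *: (b * z).
  by rewrite mulr_suml; apply: eq_bigr => b _; rewrite -scalerAl.
have sum_ca : \sum_(b <- s) c b * a b = 0.
  have : (\sum_(b <- s) c b * a b) *: k' = 0.
    rewrite -(mul0r k') -E mulE scaler_suml; apply: eq_big_seq => b bs.
    by rewrite (Ha b bs).1 scalerA.
  by move/eqP; rewrite scaler_eq0 (negPf (q_splits _)) orbF => /eqP.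
have : c k *: k = 0.
  rewrite -(mul0r k) -E mulE.
  under eq_big_seq => b bs do rewrite (Ha b bs).2 scalerDr !scalerA.
  rewrite big_split /= -!scaler_suml sum_ca scale0r add0r (bigD1_seq k) //= eqxx mulr1.
  by rewrite big1 ?addr0 // => b /negPf ->; rewrite mulr0.
by move/eqP; rewrite scaler_eq0 (negPf (q_splits _)) orbF => /eqP.
Qed.

End KeptHalves.

Lemma tree_basis_upto_free N : lin_free (tree_basis_upto N).
Proof.
elim: N => [|N IH] s c us sB E.
  have s1 b : b \in s -> b = 1 by move=> /sB[//|[]].
  move=> b bs; have b1 := s1 b bs; move: E.
  rewrite (bigD1_seq b) //= big1_seq ?addr0 => [/eqP|b' /andP[nb' b's]].
    by rewrite scaler_eq0 b1 oner_eq0 orbF => /eqP.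
  by rewrite (s1 b' b's) b1 eqxx in nb'.
have new0 b : b \in s -> kept_half N b -> c b = 0.
  move=> bs [q [qN q_splits bE]]; rewrite bE in bs *.
  exact: (kept_half_coef_eq0 qN q_splits us sB E bs).
pose old b := ~~ `[< kept_half N b >].
have E' : \sum_(b <- [seq b <- s | old b]) c b *: b = 0.
  rewrite big_filter -[RHS]E [RHS](bigID old) /= [X in _ = _ + X]big1_seq ?addr0 //.
  by move=> b /andP[/negPn/asboolP nb bs]; rewrite new0 ?scale0r.
move=> b bs; have [nb|nb] := pselect (kept_half N b); first exact: new0.
apply: (IH _ c _ _ E').
- exact: filter_uniq.
- move=> b'; rewrite mem_filter => /andP[/asboolPn nb' b's].
  by case: (tree_basis_uptoS (sB b' b's)).
- by rewrite mem_filter bs andbT; apply/asboolPn.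
Qed.

Lemma tree_basis_free : lin_free tree_basis.
Proof. exact: lin_free_nat_cover tree_basis_upto_mono tree_basis_upto_free. Qed.

Lemma kept_half_mem S n p : atom n p -> splits p n -> S (p * lit (kept p n) (d n)) ->
  (tree_basis `&` S) (p * lit (kept p n) (d n)).
Proof.
by move=> pn p_splits Sk; split=> //; exists n.+1; right; exists n => //; exists p.
Qed.

Lemma atom_lincomb_in S n p : is_ideal S -> kept_closed S -> atom n p -> S p ->
  lincomb (tree_basis `&` S) p.
Proof.
move=> iS S_kept pn; elim: pn => [|{}n {}p b pn IH] Sp.
  by apply: lincomb_mem; split=> //; exists 0%N; left.
have [->|nz] := eqVneq (p * lit b (d n)) 0; first exact: lincomb0.
have [z|nz'] := eqVneq (p * lit (~~ b) (d n)) 0.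
  have pE : p * lit b (d n) = p by rewrite -{2}(lit_split p b n) z addr0.
  by rewrite pE in Sp *; apply: IH.
have p_splits : splits p n by case; case: (b) nz nz'.
have [bk|bk] := eqVneq b (kept p n).
  by rewrite bk in Sp *; apply: lincomb_mem; apply: kept_half_mem.
have bE : b = ~~ kept p n by move: bk; case: (b); case: (kept p n).
rewrite bE in Sp *; have Sk := S_kept n p Sp.
have Sp' : S p by rewrite -(lit_split p (kept p n) n); apply: idealD.
have -> : p * lit (~~ kept p n) (d n) = p - p * lit (kept p n) (d n).
  by apply/eqP; rewrite eq_sym subr_eq addrC lit_split.
by apply: lincombB; [apply: IH | apply: lincomb_mem; apply: kept_half_mem].
Qed.

Lemma tree_basis_lincomb_ideal S x : is_ideal S -> kept_closed S ->
  lincomb (range d) x -> S x -> lincomb (tree_basis `&` S) x.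
Proof.
move=> iS S_kept dx Sx.
have [N dNx] : exists N, lincomb (d @` [set i | (i < N)%N]) x.
  apply: lincomb_nat_cover dx => [m n mn _ [i im <-]|_ [i _ <-]].
    by exists i => //; apply: leq_trans im mn.
  by exists i.+1; exists i => //=; apply: ltnSn.
rewrite -[x]mulr1 -(atom_seq_sum N) mulr_sumr.
apply: lincomb_sum => q /atom_seq_atom qN.
have [a xq] : exists a : K, x * q = a *: q.
  apply: lincomb_mul_scalar dNx => _ [i iN <-]; rewrite mulrC.
  case: (atom_mul_d qN iN) => ->; first by exists 1; rewrite scale1r.
  by exists 0; rewrite scale0r.
have [a0|a_neq0] := eqVneq a 0; first by rewrite xq a0 scale0r; apply: lincomb0.
have Sq : S q.
  rewrite -[q]scale1r -(mulVf a_neq0) -scalerA -xq.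
  by apply: (idealZ _ iS); apply: (idealMr _ iS Sx).
by rewrite xq; apply: lincombZ; apply: (atom_lincomb_in iS S_kept qN Sq).
Qed.

Lemma tree_basis_of_ideal S : (forall x, lincomb (range d) x) ->
  is_ideal S -> kept_closed S -> basis_of_set (tree_basis `&` S) S.
Proof.
move=> d_span iS S_kept; split; first exact: subIsetr.
  exact: sub_lin_free (@subIsetl _ _ _) tree_basis_free.
rewrite lin_spanE; apply/seteqP; split.
  exact: ideal_lincomb_sub (@subIsetr _ _ _).
by move=> x; apply: tree_basis_lincomb_ideal.
Qed.

End TreeBasis.
End Atoms.

Section Layers.
Variables (K : fieldType) (R : comAlgType K).
Hypothesis vnr : von_neumann_regular R.

Lemma vnr_lift_idempotent (S T : set R) x : is_ideal S -> is_ideal T ->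
  T x -> S (x * x - x) -> exists e, [/\ e * e = e, T e & S (e - x)].
Proof.
move=> iS iT Tx Ss; set s := x * x - x in Ss.
have [t st] := vnr s; set u := s * t.
have uu : u * u = u by rewrite /u mulrA -st.
have su : s * u = s by rewrite /u [s * t]mulrC mulrA -st.
exists (x * (1 - u)); split.
- have uu' : (1 - u) * (1 - u) = 1 - u.
    by rewrite mulrBl mul1r mulrBr mulr1 uu subrr subr0.
  have xx : x * x = s + x by rewrite /s subrK.
  by rewrite mulrACA uu' xx mulrDl mulrBr mulr1 su subrr add0r.
- exact: (idealMr _ iT Tx).
- rewrite mulrBr mulr1 addrAC subrr add0r; apply: (idealN iS).
  by rewrite /u mulrCA; apply: (idealMr _ iS Ss).
Qed.

Section LayerIso.
Variables (S T : set R) (I : eqType) (f : R -> I -> K).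
Hypotheses (S_ideal : is_ideal S) (T_ideal : is_ideal T).
Hypothesis f_fin : forall x, T x -> finite_set [set i | f x i != 0].
Hypothesis f_lin : forall (a : K) x y, T x -> T y ->
  f (a *: x + y) = (fun i => a * f x i + f y i).
Hypothesis f_mul : forall x y, T x -> T y -> f (x * y) = (fun i => f x i * f y i).
Hypothesis f_onto : forall g : I -> K,
  finite_set [set i | g i != 0] -> exists2 x, T x & f x = g.
Hypothesis f_ker : forall x, T x -> (f x = (fun _ => 0) <-> S x).

Definition delta (i j : I) : K := if j == i then 1 else 0.

Lemma layer_eq_mod x y : T x -> T y -> S (x - y) <-> f x = f y.
Proof.
move=> Tx Ty; have Txy : T (x - y) by apply: idealB.
rewrite -(f_ker Txy) -scaleN1r addrC f_lin ?(idealZ _ T_ideal) //.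
split=> [E|->]; last by apply: funext => i; rewrite mulN1r addNr.
apply: funext => i; apply/eqP; rewrite -subr_eq0 addrC -mulN1r.
by apply/eqP/(congr1 (@^~ i) E).
Qed.

Lemma layer_unit_idempotent i : exists e, [/\ e * e = e, T e & f e = delta i].
Proof.
have [|g Tg fg] := f_onto (g := delta i).
  apply: sub_finite_set (finite_set1 i) => j /=; rewrite /delta.
  by case: (j =P i) => [//|_]; rewrite eqxx.
have Tgg : T (g * g) by apply: (idealMl _ T_ideal Tg).
have [|e [ee Te Seg]] := vnr_lift_idempotent S_ideal T_ideal Tg.
  apply/(layer_eq_mod Tgg Tg); rewrite f_mul // fg; apply: funext => j.
  by rewrite /delta; case: eqP; rewrite ?mulr1 ?mulr0.
by exists e; split=> //; rewrite -fg; apply/layer_eq_mod.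
Qed.

Lemma layer_lincomb_mod (e : I -> R) : (forall i, T (e i) /\ f (e i) = delta i) ->
  forall z, T z -> exists2 y, lincomb (range e) y & S (z - y).
Proof.
move=> eP z Tz; have /finite_seqP[l El] := f_fin Tz.
have : forall j, f z j != 0 -> j \in l.
  by move=> j nj; have : [set j | f z j != 0] j by []; rewrite El.
elim: l z Tz {El} => [|i l IH] z Tz zl.
  exists 0; first exact: lincomb0.
  rewrite subr0; apply/(f_ker Tz)/funext => j.
  by apply/eqP; apply: contraT => /zl.
have [Tei fei] := eP i; pose z' := (- f z i) *: e i + z.
have Tz' : T z' by apply: idealD => //; apply: idealZ.
have [|y y_comb Sy] := IH z' Tz'.
  move=> j; rewrite /z' f_lin // fei /delta.
  case: (j =P i) => [->|ji]; first by rewrite mulr1 addNr eqxx.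
  by rewrite mulr0 add0r => /zl; rewrite inE => /orP[/eqP|].
exists (y + f z i *: e i).
  by apply: lincombD y_comb _; apply: lincombZ; apply: lincomb_mem; exists i.
suff -> : z - (y + f z i *: e i) = z' - y by [].
by rewrite /z' scaleNr opprD addrA [- _ + z]addrC addrAC.
Qed.

End LayerIso.

Lemma layer_iso_idempotents (S T : set R) (I : Type) : is_ideal S -> is_ideal T ->
  countable [set: I] -> layer_iso S T I ->
  exists D : set R, [/\ countable D, (forall e, D e -> e * e = e) &
     forall z, T z -> exists2 y, lincomb D y & S (z - y)].
Proof.
move=> iS iT cI [f [fin flin fmul fonto fker]].
have [e He] := choice
  (@layer_unit_idempotent S T {classic I} f iS iT flin fmul fonto fker).
exists (range e); split.
- exact: card_le_trans (card_image_le _ _) cI.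
- by move=> _ [i _ <-]; case: (He i).
apply: (@layer_lincomb_mod S T {classic I} f iT fin flin fker e) => i.
by case: (He i).
Qed.

End Layers.

Lemma countable_idempotent_lincomb (K : fieldType) (R : comAlgType K) :
  RK_countable_type R ->
  exists D : set R,
    [/\ countable D, (forall e, D e -> e * e = e) & forall x, lincomb D x].
Proof.
case=> [[vnr semi _] cst lay].
have HD S : exists D : set R, socle_stage S -> S != setT ->
    [/\ countable D, (forall e, D e -> e * e = e) &
        forall z, socle_over S z -> exists2 y, lincomb D y & S (z - y)].
  have [sS|nsS] := pselect (socle_stage S); last by exists set0.
  have [nT|TT] := boolP (S != setT); last by exists set0 => _ nT; case/negP: TT.
  have [I [_ cI li]] := lay S sS nT.
  have iS := socle_stage_ideal sS.
  have [D HD] := layer_iso_idempotents vnr iS (is_ideal_socle_over S) cI li.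
  by exists D.
have [Df HDf] := choice HD.
pose D := \bigcup_(S in [set S | socle_stage S /\ S != setT]) Df S.
exists D; split.
- apply: bigcup_countable => [|S [sS nT]]; last by case: (HDf S sS nT).
  by apply: sub_countable cst; apply: subset_card_le => S [].
- by move=> e [S [sS nT] De]; case: (HDf S sS nT) => _ + _; apply.
suff: forall S, socle_stage S -> S `<=` lincomb D by move=> /(_ _ semi) + x; apply.
move=> S; elim => [I sI IH|F sF IH] z.
  have [nT|] := boolP (I != setT); last first.
    by rewrite negbK => /eqP IT _; apply: IH; rewrite IT.
  move=> Iz; have [_ _ Hz] := HDf I sI nT; have [y Dy Iy] := Hz z Iz.
  rewrite -(subrK y z); apply: lincombD; first exact: IH.
  by apply: (sub_lincomb _ Dy) => e De; exists I.
by case=> [->|[Y FY Yz]]; [apply: lincomb0 | apply: IH Y FY z Yz].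
Qed.

Lemma idempotent_sequence_lincomb (K : fieldType) (R : comAlgType K) :
  RK_countable_type R ->
  exists d : nat -> R, (forall n, d n * d n = d n) /\ forall x, lincomb (range d) x.
Proof.
move=> /countable_idempotent_lincomb[D [/pfcard_geP[D0|[f]] D_idem D_span]].
  exists (fun _ => 0); split=> [n|x]; first by rewrite mulr0.
  by move: (D_span x); rewrite D0; apply: sub_lincomb.
exists f; split=> [n|x]; first by apply: D_idem; apply: (@funS _ _ _ _ f).
exact: sub_lincomb (@surj _ _ _ _ f) _ (D_span x).
Qed.

Theorem corollary7p4 (K : fieldType) (R : comAlgType K) :
  RK_countable_type R ->
  exists B : set R, conormed_basis B /\ multiplicative_basis B.
Proof.
move=> RK; have [[_ semi _] _ _] := RK.
have [d [d_idem d_span]] := idempotent_sequence_lincomb RK.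
pose B := tree_basis d (@socle_stage K R).
have B_stage S : socle_stage S -> basis_of_set (B `&` S) S.
  move=> sS; apply: tree_basis_of_ideal => //; first exact: socle_stage_ideal.
  exact: stage_kept_closed (@socle_stage_chain K R) sS.
have B_basis : basis_of_set B setT by rewrite -[B]setIT; apply: B_stage.
exists B; split; split=> //.
  by move=> S sS; exists (B `&` S); [apply: subIsetl | apply: B_stage].
by move=> b b'; apply: tree_basis_mul.
Qed.
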